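(* Let $\mathbf{L}=\langle L,\leq,0,1\rangle$ be a totally ordered complete lattice and let $\mathcal{D}_1,\mathcal{D}_2$ be ranked data tables on the same relation scheme $R$. Then $\mathcal{D}_1 \sqsubseteq \mathcal{D}_2$ if and only if there exists an order-preserving map $f\colon L\to L$ such that $\mathcal{D}_1\circ f=\mathcal{D}_2$.
   Context: A relation scheme $R$ is a finite set of attributes, each with a (at most countable) set of admissible values; a tuple on $R$ assigns to each attribute of $R$ an admissible value; $\mathrm{Tupl}(R)$ is the set of all tuples on $R$. A ranked data table (RDT) on $R$ is a map $\mathcal{D}\colon\mathrm{Tupl}(R)\to L$ with $\{r;\ \mathcal{D}(r)>0\}$ finite. For an RDT $\mathcal{D}$ and $r\in\mathrm{Tupl}(R)$, $\mathcal{U}(\mathcal{D},r)=\{r'\in\mathrm{Tupl}(R);\ \mathcal{D}(r')\geq\mathcal{D}(r)\}$; $\mathcal{D}_1\sqsubseteq\mathcal{D}_2$ means $\mathcal{U}(\mathcal{D}_1,r)\subseteq\mathcal{U}(\mathcal{D}_2,r)$ for all $r\in\mathrm{Tupl}(R)$. A map $f$ is order preserving if $a\leq b$ implies $f(a)\leq f(b)$. For a map $f$ on a subset of $L$ containing the values of $\mathcal{D}$, $\mathcal{D}\circ f$ denotes the map $r\mapsto f(\mathcal{D}(r))$. *)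

From HB Require Import structures.
From Stdlib Require List.
From mathcomp Require Import all_boot all_order.
Set Implicit Arguments. Unset Strict Implicit. Unset Printing Implicit Defensive.
Import Order.TTheory.
Local Open Scope order_scope.

Definition complete_lattice (d : Order.disp_t) (L : porderType d) : Prop :=
  forall P : L -> Prop, exists s : L,
    (forall x, P x -> x <= s) /\ (forall u, (forall x, P x -> x <= u) -> s <= u).

(* A relation scheme: a finite set of attributes [A], each attribute [a]
   having a (at most countable) domain [dom a]. *)
Definition Tupl (A : finType) (dom : A -> countType) := forall a : A, dom a.

Definition is_RDT (A : finType) (dom : A -> countType) (d : Order.disp_t)
  (L : tbOrderType d) (D : Tupl dom -> L) : Prop :=
  exists s : list (Tupl dom), forall r, \bot < D r -> List.In r s.

Definition U (A : finType) (dom : A -> countType) (d : Order.disp_t)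
  (L : tbOrderType d) (D : Tupl dom -> L) (r : Tupl dom) : Tupl dom -> Prop :=
  fun r' => D r <= D r'.

Definition rdt_le (A : finType) (dom : A -> countType) (d : Order.disp_t)
  (L : tbOrderType d) (D1 D2 : Tupl dom -> L) : Prop :=
  forall r r', U D1 r r' -> U D2 r r'.

From mathcomp Require Import all_boot all_order.
From Stdlib Require Import ClassicalEpsilon.
Import Order.TTheory.
Set Implicit Arguments. Unset Strict Implicit.
Local Open Scope order_scope.

(* If [D1 r <= D1 r'] always forces [D2 r <= D2 r'], then
   [f x := sup {D2 r | D1 r <= x}] is monotone and sends [D1 r] to [D2 r]:
   the sup is attained at [r] itself and bounded by [D2 r] by hypothesis.
   Conversely, composing with a monotone map preserves the preorder induced by
   [D1]. *)

Section CompleteLattice.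
Variables (d : Order.disp_t) (L : porderType d).
Hypothesis HL : complete_lattice L.

Definition lub (P : L -> Prop) : L :=
  proj1_sig (constructive_indefinite_description _ (HL P)).

Lemma lub_ub (P : L -> Prop) x : P x -> x <= lub P.
Proof.
by rewrite /lub; case: constructive_indefinite_description => s [ub _] /=; apply: ub.
Qed.

Lemma lub_least (P : L -> Prop) u : (forall x, P x -> x <= u) -> lub P <= u.
Proof.
by rewrite /lub; case: constructive_indefinite_description => s [_ least] /=; apply: least.
Qed.

Variables (T : Type) (D1 D2 : T -> L).

Definition rank_transfer (x : L) : L := lub (fun y => exists r, D1 r <= x /\ y = D2 r).

Lemma rank_transfer_homo : {homo rank_transfer : x y / x <= y}.
Proof.
move=> x y le_xy; apply: lub_least => _ [r [le_rx ->]].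
by apply: lub_ub; exists r; split => //; apply: le_trans le_xy.
Qed.

Hypothesis D1_D2_homo : forall r r', D1 r <= D1 r' -> D2 r <= D2 r'.

Lemma rank_transfer_comp r : rank_transfer (D1 r) = D2 r.
Proof.
apply/eqP; rewrite eq_le; apply/andP; split.
- by apply: lub_least => _ [r' [le_r'r ->]]; apply: D1_D2_homo.
- by apply: lub_ub; exists r.
Qed.

End CompleteLattice.

Lemma rdt_le_of_homo (d : Order.disp_t) (L : tbOrderType d) (A : finType)
  (dom : A -> countType) (D1 D2 : Tupl dom -> L) (f : L -> L) :
  {homo f : x y / x <= y} -> (forall r, f (D1 r) = D2 r) -> rdt_le D1 D2.
Proof. by move=> f_homo f_D1 r r'; rewrite /U -!f_D1; apply: f_homo. Qed.

Theorem theorem4 (d : Order.disp_t) (L : tbOrderType d)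
  (HL : complete_lattice L)
  (A : finType) (dom : A -> countType) (D1 D2 : Tupl dom -> L)
  (HD1 : is_RDT D1) (HD2 : is_RDT D2) :
  rdt_le D1 D2 <->
  exists f : L -> L, {homo f : x y / x <= y} /\ (forall r, f (D1 r) = D2 r).
Proof.
split.
- move=> le_D1D2; exists (rank_transfer HL D1 D2).
  by split; [apply: rank_transfer_homo | apply: rank_transfer_comp].
- by move=> [f [f_homo f_D1]]; apply: rdt_le_of_homo f_homo f_D1.
Qed.
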